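(* Let $k\geq2$ and let $L=(l_1,\dots,l_k)$ be generic and reduced positive integers with sum $n$. Let $\xi$ be a closed edge-path in $Tonn^{n,k}(L)$ making $p_i\geq0$ steps of type $i$ (in the order $E_1^{p_1}E_2^{p_2}\cdots E_k^{p_k}$), which represents a non-trivial class in $H_1(Tonn^{n,k}(L);\mathbb{Z})$. Then $p_i\geq3$ for some $i\in[k]$. Moreover, $\omega(\xi)=\sum_{i}p_ia_i$ cannot be written as $a_I-a_J$ for any subsets $I,J\subseteq[k]$.
   Context: $L$ is generic if for all $I,J\subseteq[k]$, $\sum_{i\in I}l_i=\sum_{j\in J}l_j$ implies $I=J$; reduced if $\gcd(l_1,\dots,l_k)=1$. The generalized tonnetz $Tonn^{n,k}(L)$ is the simplicial complex on vertex set $\mathbb{Z}_n$ whose maximal simplices are $\Delta(x;\sigma)=\{x,\,x+l_{\sigma(1)},\dots,x+l_{\sigma(1)}+\dots+l_{\sigma(k-1)}\}$ for $x\in\mathbb{Z}_n$, $\sigma\in S_k$. A step of type $i$ is an oriented 1-simplex from $y$ to $y+l_i$. $a_i=ke_i-(1,\dots,1)\in\mathbb{Z}^k$ (the value of the canonical vector cocycle $\omega$ on a step of type $i$), and for $I\subseteq[k]$, $a_I=\sum_{i\in I}a_i$ (with $a_\emptyset=0$). *)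

From HB Require Import structures.
From mathcomp Require Import all_boot all_order all_algebra all_fingroup.
Set Implicit Arguments. Unset Strict Implicit. Unset Printing Implicit Defensive.
Import Order.TTheory GRing.Theory Num.Theory.

Local Open Scope ring_scope.

(* L = (l_1,...,l_k) is indexed by 'I_k (0-based). *)
Definition generic (k : nat) (l : 'I_k -> nat) : Prop :=
  forall I J : {set 'I_k},
    (\sum_(i in I) l i)%N = (\sum_(j in J) l j)%N -> I = J.

Definition reduced (k : nat) (l : 'I_k -> nat) : Prop :=
  \big[gcdn/0%N]_(i < k) l i = 1%N.

Definition shift (n k : nat) (l : 'I_k -> nat) (y : 'Z_n) (i : 'I_k) : 'Z_n :=
  y + (l i)%:R.

Definition Delta (n k : nat) (l : 'I_k -> nat) (x : 'Z_n) (s : 'S_k) : {set 'Z_n} :=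
  [set x + (\sum_(j : 'I_k | (j < m)%N) l (s j))%N%:R | m : 'I_k].

Definition is_2simplex (n k : nat) (l : 'I_k -> nat) (a b c : 'Z_n) : bool :=
  [&& a != b, b != c, a != c &
      [exists x : 'Z_n, exists s : 'S_k, [set a; b; c] \subset Delta l x s]].

(* Integral simplicial 1-chains are encoded as antisymmetric functions on
   ordered pairs of vertices: the oriented edge [a,b] is the function
   (u,v) |-> [(u,v)=(a,b)] - [(u,v)=(b,a)]. *)
Definition edge_chain (n : nat) (a b : 'Z_n) : 'Z_n -> 'Z_n -> int :=
  fun u v => ((u == a) && (v == b))%:Z - ((u == b) && (v == a))%:Z.

Definition bd2 (n : nat) (a b c : 'Z_n) : 'Z_n -> 'Z_n -> int :=
  fun u v => edge_chain b c u v - edge_chain a c u v + edge_chain a b u v.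

Fixpoint path_chain (n k : nat) (l : 'I_k -> nat) (y : 'Z_n) (s : seq 'I_k)
  : 'Z_n -> 'Z_n -> int :=
  match s with
  | [::] => fun _ _ => 0
  | i :: s' => fun u v => edge_chain y (shift l y i) u v + path_chain l (shift l y i) s' u v
  end.

Definition steps (k : nat) (p : 'I_k -> nat) : seq 'I_k :=
  flatten [seq nseq (p i) i | i <- enum 'I_k].

Definition is_boundary (n k : nat) (l : 'I_k -> nat) (c : 'Z_n -> 'Z_n -> int) : Prop :=
  exists coef : 'Z_n -> 'Z_n -> 'Z_n -> int,
    (forall a b d, coef a b d != 0 -> is_2simplex l a b d) /\
    (forall u v, c u v = \sum_(a : 'Z_n) \sum_(b : 'Z_n) \sum_(d : 'Z_n) coef a b d * bd2 a b d u v).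

Definition avec (k : nat) (i : 'I_k) : 'I_k -> int :=
  fun j => (k%:Z) * (i == j)%:Z - 1.

Definition aset (k : nat) (I : {set 'I_k}) : 'I_k -> int :=
  fun j => \sum_(i in I) avec i j.

Definition omega_path (k : nat) (p : 'I_k -> nat) : 'I_k -> int :=
  fun j => \sum_(i < k) (p i)%:Z * avec i j.

From mathcomp Require Import all_boot all_order all_algebra all_fingroup.
From mathcomp Require Import ring zify.
Import GRing.Theory Num.Theory.
Local Open Scope ring_scope.
Set Implicit Arguments. Unset Strict Implicit. Unset Printing Implicit Defensive.

(* Two consecutive steps y -> y + l_a -> y + l_a + l_b lie in a common
   maximal simplex, so swapping adjacent steps does not change the homology
   class of an edge path, and only the multiset of step types matters.  If
   every type occurs the same number m of times, the path is thus homologous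
   to m copies of the loop E_1 E_2 ... E_k, which runs along the vertices of
   the single simplex Delta(x; id) and bounds.  Both conclusions are proved
   by contraposition: if every p_i <= 2, or if omega(xi) = a_I - a_J, then
   p_j + [j in J] = c + [j in I] for a constant c.  Closedness of xi makes n
   divide l(I) - l(J), where l(A) is the sum of the l_i over A, and genericity
   forces I = J or {I, J} = {0, [k]}; in all three cases p is constant. *)

Lemma exists_perm2 (T : finType) (x1 x2 y1 y2 : T) :
  x1 != x2 -> y1 != y2 -> exists s : {perm T}, s x1 = y1 /\ s x2 = y2.
Proof.
move=> nx ny; exists (tperm x2 (tperm x1 y1 y2) * tperm x1 y1)%g.
rewrite !permM tpermL tpermK; split=> //.
rewrite (@tpermD _ x2) ?tpermL 1?eq_sym //.
by apply: contra ny => /eqP/(congr1 (tperm x1 y1)); rewrite tpermK tpermL => ->.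
Qed.

Lemma generic_dvd_sum k (l : 'I_k -> nat) (I J : {set 'I_k}) : generic l ->
  ((\sum_i l i)%N%:Z %| (\sum_(i in I) l i)%N%:Z - (\sum_(i in J) l i)%N%:Z)%Z ->
  [\/ I = J, I = setT /\ J = set0 | I = set0 /\ J = setT].
Proof.
move=> hgen /dvdzP[q hq].
have sum_le (A : {set 'I_k}) : (\sum_(i in A) l i <= \sum_i l i)%N.
  by rewrite [X in (_ <= X)%N](bigID (mem A)) leq_addr.
have sumT : (\sum_(i in [set: 'I_k]) l i = \sum_i l i)%N.
  by apply: eq_bigl => i; rewrite in_setT.
have is_set0 (A : {set 'I_k}) : (\sum_(i in A) l i = 0)%N -> A = set0.
  by move=> hA; apply: (hgen A set0); rewrite hA big_set0.
have is_setT (A : {set 'I_k}) : (\sum_(i in A) l i = \sum_i l i)%N -> A = setT.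
  by move=> hA; apply: (hgen A setT); rewrite hA sumT.
have := sum_le I; have := sum_le J.
set N := (\sum_i l i)%N; set SI := (\sum_(i in I) l i)%N; set SJ := (\sum_(i in J) l i)%N.
move=> leJ leI.
have : (SI = SJ \/ SI = N /\ SJ = 0 \/ SI = 0 /\ SJ = N)%N.
  have : (q <= -1 \/ q = 0 \/ 1 <= q)%R by lia.
  by case=> [|[|]] ?; nia.
case=> [/(hgen I J)|[[/is_setT -> /is_set0 ->]|[/is_set0 -> /is_setT ->]]]; by constructor.
Qed.

Lemma big_take_enum_ord (R : Type) (idx : R) (op : R -> R -> R) k r (F : 'I_k -> R) :
  (r <= k)%N ->
  \big[op/idx]_(i <- take r (enum 'I_k)) F i = \big[op/idx]_(i : 'I_k | (i < r)%N) F i.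
Proof.
move=> r_le; rewrite -[RHS]big_filter [index_enum _]unlock -enumT; congr bigop.
apply: (inj_map val_inj); rewrite map_take val_enum_ord take_iota.
rewrite -(filter_map val (fun x => (x < r)%N)) val_enum_ord (minn_idPl r_le).
by rewrite -(filter_iota_ltn 0 r_le).
Qed.

Lemma sum_steps k (p F : 'I_k -> nat) :
  (\sum_(i <- steps p) F i = \sum_i p i * F i)%N.
Proof.
rewrite /steps big_flatten big_map big_enum /=; apply: eq_bigr => i _.
by rewrite big_nseq iter_addn_0 mulnC.
Qed.

Lemma perm_steps_const k (p : 'I_k -> nat) m : (forall i, p i = m) ->
  perm_eq (steps p) (flatten (nseq m (enum 'I_k))).
Proof.
move=> hp; apply/seq.permP => a.
rewrite /steps !count_flatten -map_comp map_nseq sumn_nseq.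
rewrite (eq_map (_ : _ =1 fun i => a i * m)%N) => [|i /=]; last by rewrite count_nseq hp.
by elim: (enum 'I_k) => //= i s ->; rewrite mulnDl mulnC.
Qed.

Section Homology.
Variables (n k : nat) (l : 'I_k -> nat).

Local Notation chain := ('Z_n -> 'Z_n -> int).
Local Notation boundary := (@is_boundary n k l).
Local Notation path := (path_chain l).
Local Notation endpoint := (foldl (@shift n k l)).

Lemma eq_is_boundary (c c' : chain) : c =2 c' -> boundary c -> boundary c'.
Proof. by move=> e [co [Hco Hc]]; exists co; split=> // u v; rewrite -e. Qed.

Lemma is_boundary0 : boundary (fun _ _ => 0).
Proof.
exists (fun _ _ _ => 0); split=> [a b d|u v]; first by rewrite eqxx.
by rewrite big1 // => a _; rewrite big1 // => b _; rewrite big1 // => d _; rewrite mul0r.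
Qed.

Lemma is_boundaryD (c1 c2 : chain) :
  boundary c1 -> boundary c2 -> boundary (fun u v => c1 u v + c2 u v).
Proof.
move=> [co1 [H1 E1]] [co2 [H2 E2]].
exists (fun a b d => co1 a b d + co2 a b d); split=> [a b d|u v].
  by case: (eqVneq (co1 a b d) 0) => [->|/H1 //]; rewrite add0r => /H2.
rewrite E1 E2 -big_split; apply: eq_bigr => a _; rewrite -big_split.
by apply: eq_bigr => b _; rewrite -big_split; apply: eq_bigr => d _; rewrite mulrDl.
Qed.

Lemma is_boundaryN (c : chain) : boundary c -> boundary (fun u v => - c u v).
Proof.
move=> [co [H E]]; exists (fun a b d => - co a b d); split=> [a b d|u v].
  by rewrite oppr_eq0 => /H.
rewrite E -sumrN; apply: eq_bigr => a _; rewrite -sumrN.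
by apply: eq_bigr => b _; rewrite -sumrN; apply: eq_bigr => d _; rewrite mulNr.
Qed.

Definition homologous (c1 c2 : chain) := boundary (fun u v => c1 u v - c2 u v).

Lemma homologous_refl (c : chain) : homologous c c.
Proof. by apply: eq_is_boundary is_boundary0 => u v; rewrite subrr. Qed.

Lemma homologous_sym (c1 c2 : chain) : homologous c1 c2 -> homologous c2 c1.
Proof. by move/is_boundaryN; apply: eq_is_boundary => u v; rewrite opprB. Qed.

Lemma homologous_trans (c1 c2 c3 : chain) :
  homologous c1 c2 -> homologous c2 c3 -> homologous c1 c3.
Proof. by move=> h1 h2; apply: eq_is_boundary (is_boundaryD h1 h2) => u v; ring. Qed.

Lemma homologousD (c1 c2 d1 d2 : chain) : homologous c1 c2 -> homologous d1 d2 ->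
  homologous (fun u v => c1 u v + d1 u v) (fun u v => c2 u v + d2 u v).
Proof. by move=> h1 h2; apply: eq_is_boundary (is_boundaryD h1 h2) => u v; ring. Qed.

Lemma eq_homologous (c1 c2 d1 d2 : chain) : c1 =2 d1 -> c2 =2 d2 ->
  homologous c1 c2 -> homologous d1 d2.
Proof. by move=> e1 e2; apply: eq_is_boundary => u v; rewrite e1 e2. Qed.

Lemma homologous_boundary (c1 c2 : chain) :
  homologous c1 c2 -> boundary c2 -> boundary c1.
Proof. by move=> h /(is_boundaryD h); apply: eq_is_boundary => u v; rewrite subrK. Qed.

Lemma edge_chainxx (a : 'Z_n) u v : edge_chain a a u v = 0.
Proof. by rewrite /edge_chain subrr. Qed.

Lemma edge_chainC (a b : 'Z_n) u v : edge_chain a b u v = - edge_chain b a u v.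
Proof. by rewrite /edge_chain opprB. Qed.

Lemma homologous_triangle (a b c : 'Z_n) :
  (exists x s, [set a; b; c] \subset Delta l x s) ->
  homologous (fun u v => edge_chain a b u v + edge_chain b c u v) (edge_chain a c).
Proof.
move=> [x [s abc_in]].
case: (eqVneq a b) => [<-|nab].
  by apply: eq_is_boundary is_boundary0 => u v; rewrite edge_chainxx add0r subrr.
case: (eqVneq b c) => [<-|nbc].
  by apply: eq_is_boundary is_boundary0 => u v; rewrite edge_chainxx addr0 subrr.
case: (eqVneq a c) => [<-|nac].
  by apply: eq_is_boundary is_boundary0 => u v;
    rewrite edge_chainxx (edge_chainC b a) subrr subr0.
exists (fun a' b' c' => ((a' == a) && (b' == b) && (c' == c))%:Z).
split=> [a' b' c'|u v].
  case: andP => [[/andP[/eqP-> /eqP->] /eqP->] _|//].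
  by rewrite /is_2simplex nab nbc nac; apply/existsP; exists x; apply/existsP; exists s.
rewrite (bigD1 a) //= [X in _ = _ + X]big1 ?addr0; last first.
  by move=> a' /negbTE ->; rewrite big1 // => b' _; rewrite big1 // => c' _; rewrite mul0r.
rewrite (bigD1 b) //= [X in _ = _ + X]big1 ?addr0; last first.
  by move=> b' /negbTE ->; rewrite big1 // => c' _; rewrite andbF mul0r.
rewrite (bigD1 c) //= [X in _ = _ + X]big1 ?addr0; last first.
  by move=> c' /negbTE ->; rewrite andbF mul0r.
by rewrite !eqxx mul1r /bd2; ring.
Qed.

Lemma endpointE (y : 'Z_n) s : endpoint y s = y + (\sum_(i <- s) l i)%N%:R.
Proof.
elim: s y => [|i s IH] y /=; first by rewrite big_nil addr0.
by rewrite IH big_cons /shift natrD addrA.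
Qed.

Lemma path_chain_cat (y : 'Z_n) s1 s2 u v :
  path y (s1 ++ s2) u v = path y s1 u v + path (endpoint y s1) s2 u v.
Proof. by elim: s1 y => [|i s IH] y /=; rewrite ?add0r // IH addrA. Qed.

Lemma homologous_cons (y : 'Z_n) i s t :
  homologous (path (shift l y i) s) (path (shift l y i) t) ->
  homologous (path y (i :: s)) (path y (i :: t)).
Proof. exact: homologousD (homologous_refl _). Qed.

Lemma homologous_path_in_simplex x (sg : 'S_k) (z : 'Z_n) s :
  (forall r, (r <= size s)%N -> endpoint z (take r s) \in Delta l x sg) ->
  homologous (path z s) (edge_chain z (endpoint z s)).
Proof.
elim: s z => [|i s IH] z in_sg /=.
  by apply: eq_is_boundary is_boundary0 => u v; rewrite edge_chainxx subrr.
have IHs := IH (shift l z i) (fun r hr => in_sg r.+1 hr).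
apply: homologous_trans (homologousD (homologous_refl _) IHs) _.
apply: homologous_triangle; exists x, sg.
apply/subsetP => w; rewrite !inE => /orP[/orP[]|]/eqP->.
- exact: (in_sg 0%N).
- by have := in_sg 1%N isT; rewrite /= take0.
- by have := in_sg (size s).+1 (leqnn _); rewrite /= take_size.
Qed.

Section Tonnetz.
Hypotheses (hn : n = (\sum_i l i)%N) (n_gt1 : (1 < n)%N).

Let k_gt0 : (0 < k)%N.
Proof.
case: (posnP k) => // k0; move: n_gt1; rewrite hn big1 // => i.
by have := ltn_ord i; rewrite [X in (_ < X)%N]k0.
Qed.

Lemma mem_Delta_prefix (y : 'Z_n) (sg : 'S_k) m : (m <= k)%N ->
  y + (\sum_(t : 'I_k | (t < m)%N) l (sg t))%N%:R \in Delta l y sg.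
Proof.
move=> m_le; case: (ltnP m k) => [m_lt|m_ge]; first by apply/imsetP; exists (Ordinal m_lt).
have -> : m = k by apply/eqP; rewrite eqn_leq m_le.
have -> : (\sum_(t : 'I_k | (t < k)%N) l (sg t))%N = n.
  rewrite hn [RHS](reindex_inj (@perm_inj _ sg)); apply: eq_bigl => t; exact: ltn_ord.
rewrite pchar_Zp // addr0; apply/imsetP; exists (Ordinal k_gt0) => //=.
by rewrite big1 ?addr0 // => t; rewrite ltn0.
Qed.

Lemma homologous_path2 (y : 'Z_n) a b : a != b ->
  homologous (path y [:: a; b]) (edge_chain y (y + (l a + l b)%N%:R)).
Proof.
move=> nab; have k_gt1 : (1 < k)%N.
  by have := ltn_ord a; have := ltn_ord b; move: nab; rewrite -val_eqE /=; lia.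
pose i0 := Ordinal k_gt0; pose i1 := Ordinal k_gt1.
have [sg [sg0 sg1]] := @exists_perm2 _ i0 i1 a b isT nab.
apply: (eq_homologous _ (fun _ _ => erefl)
  (homologous_triangle (a := y) (b := y + (l a)%:R) (c := y + (l a + l b)%N%:R) _)).
  by move=> u v; rewrite /= /shift /edge_chain natrD !addrA addr0.
exists y, sg; apply/subsetP => w; rewrite !inE => /orP[/orP[]|]/eqP->.
- have := mem_Delta_prefix y sg (leq0n k).
  by rewrite big_pred0 ?addr0 // => t; rewrite ltn0.
- have := mem_Delta_prefix y sg (ltnW k_gt1).
  by rewrite (big_pred1 i0) ?sg0 // => -[[|t] ht].
- have := mem_Delta_prefix y sg k_gt1.
  by rewrite (bigD1 i0) //= (big_pred1 i1) ?sg0 ?sg1 // => -[[|[|t]] ht].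
Qed.

Lemma homologous_swap (y : 'Z_n) i j s :
  homologous (path y (i :: j :: s)) (path y (j :: i :: s)).
Proof.
case: (eqVneq i j) => [->|nij]; first exact: homologous_refl.
have split2 a b u v : path y [:: a; b] u v + path (y + (l a + l b)%N%:R) s u v =
    path y (a :: b :: s) u v.
  by rewrite -[a :: b :: s]/([:: a; b] ++ s) path_chain_cat endpointE !big_cons big_nil addn0.
apply: (eq_homologous (split2 i j) (split2 j i)); rewrite [(l j + _)%N]addnC.
apply/homologousD/homologous_refl/(homologous_trans (homologous_path2 y nij)).
by rewrite addnC; apply/homologous_sym/homologous_path2; rewrite eq_sym.
Qed.

Lemma homologous_path_insert (y : 'Z_n) i t1 t2 :
  homologous (path y (i :: t1 ++ t2)) (path y (t1 ++ i :: t2)).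
Proof.
elim: t1 y => [|j t1 IH] y /=; first exact: homologous_refl.
exact: homologous_trans (homologous_swap y i j (t1 ++ t2)) (homologous_cons (IH _)).
Qed.

Lemma homologous_perm (y : 'Z_n) s t :
  perm_eq s t -> homologous (path y s) (path y t).
Proof.
elim: s t y => [|i s IH] t y.
  by rewrite perm_sym => /perm_nilP ->; exact: homologous_refl.
move=> hst; have t_i : i \in t by rewrite -(perm_mem hst) mem_head.
move: hst; case/splitPr: t_i => t1 t2 hst.
have /IH hs : perm_eq s (t1 ++ t2).
  by rewrite -(perm_cons i) (perm_trans hst) ?(perm_catCA t1 [:: i] t2).
exact: homologous_trans (homologous_cons (hs _)) (homologous_path_insert y i t1 t2).
Qed.

Lemma endpoint_enum (y : 'Z_n) : endpoint y (enum 'I_k) = y.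
Proof. by rewrite endpointE big_enum /= -hn pchar_Zp // addr0. Qed.

Lemma is_boundary_loop (y : 'Z_n) : boundary (path y (enum 'I_k)).
Proof.
have := @homologous_path_in_simplex y 1%g y (enum 'I_k).
rewrite endpoint_enum => h; apply: eq_is_boundary (h _) => [u v|r].
  by rewrite edge_chainxx subr0.
rewrite size_enum_ord => r_le; rewrite endpointE big_take_enum_ord //.
by have := mem_Delta_prefix y 1%g r_le; under eq_bigr do rewrite perm1.
Qed.

Lemma is_boundary_loops m (y : 'Z_n) : boundary (path y (flatten (nseq m (enum 'I_k)))).
Proof.
elim: m => [|m IH] /=; first exact: is_boundary0.
apply: eq_is_boundary (is_boundaryD (is_boundary_loop y) IH) => u v.
by rewrite path_chain_cat endpoint_enum.
Qed.

Lemma is_boundary_const_steps (y : 'Z_n) (p : 'I_k -> nat) m :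
  (forall i, p i = m) -> boundary (path y (steps p)).
Proof.
move=> hp; apply: homologous_boundary (is_boundary_loops m y).
exact/homologous_perm/perm_steps_const.
Qed.

Lemma dvdn_closed_path (x : 'Z_n) (p : 'I_k -> nat) :
  endpoint x (steps p) = x -> (n %| \sum_i p i * l i)%N.
Proof.
rewrite endpointE sum_steps -{2}[x]addr0 => /addrI /(congr1 (@nat_of_ord _)).
by rewrite val_Zp_nat // => /eqP.
Qed.

Lemma is_boundary_balanced_path (x : 'Z_n) (p : 'I_k -> nat) (c : int)
    (I J : {set 'I_k}) :
  generic l -> endpoint x (steps p) = x ->
  (forall j, (p j)%:Z + (j \in J)%:Z = c + (j \in I)%:Z) ->
  boundary (path x (steps p)).
Proof.
move=> hgen closed hp.
have sum_in (A : {set 'I_k}) : (\sum_(i in A) l i)%N%:Z = \sum_i (i \in A)%:Z * (l i)%:Z.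
  rewrite -natz big_mkcond natr_sum; apply: eq_bigr => i _.
  by case: (i \in A); rewrite ?mul1r ?mul0r natz.
have n_dvd : ((\sum_i l i)%N%:Z %| (\sum_(i in I) l i)%N%:Z - (\sum_(i in J) l i)%N%:Z)%Z.
  have /dvdnP[q hq] := dvdn_closed_path closed.
  apply/dvdzP; exists (q%:Z - c); rewrite -hn mulrBl -PoszM -hq !sum_in hn.
  rewrite -!natz !natr_sum mulr_sumr -!sumrB; apply: eq_bigr => i _.
  rewrite natrM !natz -!mulrBl; congr (_ * _).
  by move: (hp i); case: (i \in I); case: (i \in J) => /=; lia.
suff [m hm] : exists m, forall i, p i = m by exact: is_boundary_const_steps hm.
pose i0 := Ordinal k_gt0; exists (p i0) => j; move: (hp j) (hp i0).
case: (generic_dvd_sum hgen n_dvd) => [->|[->->]|[->->]]; by rewrite ?inE; lia.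
Qed.

End Tonnetz.
End Homology.

Lemma sum_mul_delta k (P : pred 'I_k) (F : 'I_k -> int) j :
  \sum_(i | P i) F i * (i == j)%:Z = if P j then F j else 0.
Proof.
rewrite big_mkcond (bigD1 j) //= eqxx mulr1 big1 ?addr0 // => i /negbTE ->.
by case: (P i); rewrite ?mulr0.
Qed.

Lemma omega_pathE k (p : 'I_k -> nat) j :
  omega_path p j = k%:Z * (p j)%:Z - (\sum_i p i)%N%:Z.
Proof.
rewrite /omega_path; unfold avec.
under [in LHS]eq_bigr => i _ do rewrite mulrBr mulr1 mulrA.
rewrite sumrB (sum_mul_delta xpredT (fun i => (p i)%:Z * k%:Z)) /= mulrC.
by rewrite -(natz (\sum_i p i)%N) natr_sum; congr (_ - _); apply: eq_bigr => i _; rewrite natz.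
Qed.

Lemma asetE k (A : {set 'I_k}) j : aset A j = k%:Z * (j \in A)%:Z - #|A|%:Z.
Proof.
rewrite /aset /avec sumrB sumr_const natz.
rewrite (sum_mul_delta _ (fun _ => k%:Z)).
by case: (j \in A); rewrite ?mulr1 ?mulr0.
Qed.

Lemma balanced_of_omega k (p : 'I_k -> nat) (I J : {set 'I_k}) (i0 : 'I_k) :
  (forall j, omega_path p j = aset I j - aset J j) ->
  forall j, (p j)%:Z + (j \in J)%:Z
            = (p i0)%:Z + (i0 \in J)%:Z - (i0 \in I)%:Z + (j \in I)%:Z.
Proof.
move=> homega j.
have scaled j' : k%:Z * ((p j')%:Z + (j' \in J)%:Z - (j' \in I)%:Z)
    = (\sum_i p i)%N%:Z - #|I|%:Z + #|J|%:Z.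
  have := homega j'; rewrite omega_pathE !asetE => /eqP.
  by rewrite subr_eq mulrBr mulrDr => /eqP ->; ring.
have k_neq0 : k%:Z != 0 by rewrite eqz_nat -lt0n (leq_ltn_trans _ (ltn_ord i0)).
have := mulfI k_neq0 (etrans (scaled j) (esym (scaled i0))).
by move=> <-; ring.
Qed.

Theorem proposition5p6 (k : nat) (l : 'I_k -> nat) (n : nat)
  (hk : (2 <= k)%N) (hpos : forall i, (0 < l i)%N)
  (hgen : generic l) (hred : reduced l)
  (hn : n = (\sum_(i < k) l i)%N)
  (p : 'I_k -> nat) (x : 'Z_n)
  (hclosed : foldl (@shift n k l) x (steps p) = x)
  (hnontriv : ~ is_boundary l (path_chain l x (steps p))) :
  (exists i, (3 <= p i)%N) /\
  (forall I J : {set 'I_k}, ~ (forall j, omega_path p j = aset I j - aset J j)).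
Proof.
have n_gt1 : (1 < n)%N.
  rewrite hn (leq_trans hk) // -[X in (X <= _)%N]card_ord -sum1_card; exact: leq_sum.
have balanced := is_boundary_balanced_path hn n_gt1 hgen hclosed.
split.
  case: (boolP [exists i, 3 <= p i]%N) => [/existsP //|/existsPn small].
  exfalso; apply/hnontriv/(balanced 1 [set i | p i == 2] [set i | p i == 0])%N => j.
  by have := small j; rewrite !inE; case: (p j) => [|[|[|m]]].
move=> I J /(balanced_of_omega (Ordinal (ltnW hk))) homega.
exact/hnontriv/balanced/homega.
Qed.
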